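(* Let $\mathcal{A}$ be a fixed (non-random) partition of $\Theta$ into measurable sets, and let $(\theta_1,\mathbf{X}_1),\dots,(\theta_B,\mathbf{X}_B),(\theta,\mathbf{X})$ be i.i.d. pairs with $\theta_b \sim r$ and $\mathbf{X}_b \mid \theta_b$ distributed according to the statistical model at $\theta_b$ (and likewise for $(\theta,\mathbf{X})$). Fix $A \in \mathcal{A}$ with $\mathbb{P}(\theta \in A) > 0$ and $\alpha\in(0,1)$. Let $I_A = \{b \in \{1,\dots,B\} : \theta_b \in A\}$, define for $t\in\mathbb{R}$ $$\widehat H_B(t \mid A) = \frac{1}{|I_A|+1}\Big(\sum_{b \in I_A} \mathbb{I}\big(\tau(\mathbf{X}_b,\theta_b) \le t\big) + 1\Big),$$ and let $\widehat C_{A,B} = \inf\{t \in \mathbb{R} : \widehat H_B(t\mid A) \ge \alpha\}$ (the adjusted $\alpha$-quantile; possibly $-\infty$). For $\theta' \in A$ set $\widehat C_{\theta',B} := \widehat C_{A,B}$, and let $\widehat R_B(\mathbf{X}) = \{\theta' \in \Theta : \tau(\mathbf{X},\theta') \ge \widehat C_{\theta',B}\}$. Then $$\mathbb{P}\big(\theta \in \widehat R_B(\mathbf{X}) \mid \theta \in A\big) \ge 1-\alpha,$$ where the probability is over both the simulated data and the new pair $(\theta,\mathbf{X})$.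
   Context: A statistical model gives, for each parameter $\theta \in \Theta$, a distribution of the data $\mathbf{X}\in\mathcal{X}$; $r$ is a reference probability distribution on $\Theta$. A fixed measurable function $\tau : \mathcal{X}\times\Theta \to \mathbb{R}$ (a test statistic) is given, and for every $\theta$ the conditional distribution of $\tau(\mathbf{X},\theta)$ given $\theta$ is continuous (has no atoms). *)

From HB Require Import structures.
From mathcomp Require Import all_boot all_order all_algebra.
From mathcomp Require Import all_classical all_reals all_analysis.
Set Implicit Arguments. Unset Strict Implicit. Unset Printing Implicit Defensive.
Import Order.TTheory GRing.Theory Num.Theory.
Local Open Scope classical_set_scope.
Local Open Scope ring_scope.

Definition measurable_partition {d} {T : measurableType d} (Apart : set (set T)) :=
  [/\ (forall A, Apart A -> measurable A),
      (forall A1 A2, Apart A1 -> Apart A2 -> A1 `&` A2 !=set0 -> A1 = A2) &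
      (forall t, exists A, Apart A /\ A t)].

Definition mutually_independent {d dV} {Omega : measurableType d}
    {V : measurableType dV} {R : realType} (P : probability Omega R)
    {I : finType} (Z : I -> Omega -> V) :=
  forall (J : {set I}) (E : I -> set V), (forall i, measurable (E i)) ->
    P (\bigcap_(i in [set` J]) (Z i @^-1` E i)) = (\prod_(i in J) P (Z i @^-1` E i))%E.

(* The pair (th, Xv) has joint law "th ~ r, Xv | th ~ M th". *)
Definition has_joint_law {d dT dX} {Omega : measurableType d}
    {Theta : measurableType dT} {X : measurableType dX} {R : realType}
    (P : probability Omega R) (r : probability Theta R) (M : R.-pker Theta ~> X)
    (th : Omega -> Theta) (Xv : Omega -> X) :=
  forall (S : set Theta) (U : set X), measurable S -> measurable U ->
    P (th @^-1` S `&` Xv @^-1` U) = (\int[r]_(t in S) M t U)%E.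

Definition all_pairs {Omega Theta X : Type} {B : nat}
    (th : 'I_B -> Omega -> Theta) (Xs : 'I_B -> Omega -> X)
    (th0 : Omega -> Theta) (X0 : Omega -> X) : option 'I_B -> Omega -> Theta * X :=
  fun o w => match o with Some b => (th b w, Xs b w) | None => (th0 w, X0 w) end.

Definition Hhat {Omega Theta X : Type} {R : realType} {B : nat}
    (tau : X -> Theta -> R) (th : 'I_B -> Omega -> Theta) (Xs : 'I_B -> Omega -> X)
    (A : set Theta) (w : Omega) (t : R) : R :=
  ((\sum_(b < B | th b w \in A) (nat_of_bool (tau (Xs b w) (th b w) <= t)%R)%:R) + 1)
  / ((#|[set b : 'I_B | th b w \in A]|)%:R + 1).

Definition Chat {Omega Theta X : Type} {R : realType} {B : nat}
    (tau : X -> Theta -> R) (th : 'I_B -> Omega -> Theta) (Xs : 'I_B -> Omega -> X)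
    (alpha : R) (A : set Theta) (w : Omega) : \bar R :=
  ereal_inf [set t%:E | t in [set t : R | alpha <= Hhat tau th Xs A w t]].

Definition Rhat {Omega Theta X : Type} {R : realType} {B : nat}
    (Apart : set (set Theta))
    (tau : X -> Theta -> R) (th : 'I_B -> Omega -> Theta) (Xs : 'I_B -> Omega -> X)
    (alpha : R) (w : Omega) (x : X) : set Theta :=
  [set th' | forall A', Apart A' -> A' th' ->
     (Chat tau th Xs alpha A' w <= (tau x th')%:E)%E].

Definition condprob {d} {Omega : measurableType d} {R : realType}
    (P : probability Omega R) (E F : set Omega) : R :=
  fine (P (E `&` F)) / fine (P F).

From HB Require Import structures.
From mathcomp Require Import all_boot all_order all_algebra.
From mathcomp Require Import all_classical all_reals all_analysis.
From mathcomp Require Import perm measurable_realfun.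
Import Order.TTheory GRing.Theory Num.Theory.
Local Open Scope classical_set_scope.
Local Open Scope ring_scope.

(* Mark a pair when its parameter lies in A and score it by tau. The new pair
   (theta, X) falls outside the confidence set exactly when it is marked and its
   rank (the number of marked pairs, itself included, scoring at most as much) is
   below alpha times the number of marked pairs. At most an alpha-fraction of the
   marked pairs can have this property, whatever the ties, and since the B + 1
   pairs are i.i.d., hence exchangeable, each has it with the same probability.
   Hence (B + 1) P(miss) <= alpha (B + 1) P(theta in A). *)

Lemma big_option (R : Type) (idx : R) (op : Monoid.com_law idx) (T : finType)
    (F : option T -> R) :
  \big[op/idx]_(o : option T) F o = op (F None) (\big[op/idx]_(t : T) F (Some t)).
Proof.
rewrite (bigD1 None) //=; congr (op _ _).
rewrite (reindex_omap Some id) /=; last by case.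
by apply: eq_bigl => t; rewrite eqxx.
Qed.

Lemma in_set_boolE (T : Type) (b : T -> bool) (x : T) :
  (x \in [set y | b y]) = b x.
Proof. by apply/idP/idP; rewrite inE. Qed.

Section LowRank.
Context {R : realType} {T : Type} {I : finType} (mark : T -> bool) (score : T -> R).

Definition rank (f : I -> T) (i : I) : R :=
  \sum_j (mark (f j) && (score (f j) <= score (f i)))%:R.

Definition nmarked (f : I -> T) : R := \sum_j (mark (f j))%:R.

Definition low_rank (alpha : R) (f : I -> T) (i : I) : bool :=
  mark (f i) && (rank f i < alpha * nmarked f).

(* Every low-rank index is counted in the rank of the low-rank index of largest
   score, and that rank is below [alpha * nmarked f]. *)
Lemma sum_low_rank_le alpha f : 0 <= alpha ->
  \sum_i (low_rank alpha f i)%:R <= alpha * nmarked f.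
Proof.
move=> alpha_ge0; case: (pickP (low_rank alpha f)) => [i0 low_i0|none]; last first.
  rewrite big1 => [|i _]; last by rewrite none.
  by rewrite mulr_ge0 // sumr_ge0.
case: (arg_maxP (score \o f) low_i0) => i low_i score_max.
have /andP[_ rank_i] := low_i.
apply: le_trans (ltW rank_i); apply: ler_sum => j _.
have [low_j|_] := boolP (low_rank alpha f j); last exact: ler0n.
by have /andP[-> _] := low_j; have /= -> := score_max j low_j.
Qed.

Lemma low_rank_perm (s : {perm I}) alpha f i :
  low_rank alpha (f \o s) i = low_rank alpha f (s i).
Proof.
rewrite /low_rank /rank /nmarked /=.
have reindex (F : I -> R) : \sum_j F (s j) = \sum_j F j.
  by rewrite [RHS](reindex_inj (@perm_inj _ s)).
by rewrite (reindex (fun j => (mark (f j) && (score (f j) <= score (f (s i))))%:R))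
  (reindex (fun j => (mark (f j))%:R)).
Qed.

End LowRank.

Definition cylinders (I : Type) {d} (V : measurableType d) : set (set (I -> V)) :=
  [set [set f | forall i, E i (f i)] | E in [set E | forall i, measurable (E i)]].

Definition cylinder_space (I : Type) {d} (V : measurableType d) :=
  g_sigma_algebraType (cylinders I V).

Definition identically_distributed {d dV} {Omega : measurableType d}
    {V : measurableType dV} {R : realType} (P : probability Omega R)
    {I : Type} (Z : I -> Omega -> V) :=
  forall i j (E : set V), measurable E -> P (Z i @^-1` E) = P (Z j @^-1` E).

Section CylinderSpace.
Context {R : realType} {d dV : measure_display}.
Context {Omega : measurableType d} {V : measurableType dV} {I : finType}.

Lemma measurable_proj i : measurable_fun setT (fun f : cylinder_space I V => f i).
Proof.
move=> _ E mE; rewrite setTI; apply: sub_sigma_algebra.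
exists (fun k => if k == i then E else setT) => [k|]; first by case: ifP.
apply/seteqP; split => f /= Ef; first by have := Ef i; rewrite eqxx.
by move=> k; case: eqP => [->|].
Qed.

Lemma measurable_fun_tuple {Z : I -> Omega -> V} :
  (forall i, measurable_fun setT (Z i)) ->
  measurable_fun setT ((fun w i => Z i w) : Omega -> cylinder_space I V).
Proof.
move=> mZ.
apply: (@measurability _ _ _ (cylinder_space I V) _ _ (cylinders I V)) => //.
move=> _ [S [E mE <-] <-]; rewrite setTI.
have -> : (fun w i => Z i w) @^-1` [set f | forall i, E i (f i)] =
          \bigcap_(i in setT) (Z i @^-1` E i).
  by apply/seteqP; split => w /= Ew i; [move=> _|]; exact: Ew.
apply: fin_bigcap_measurable => [|i _]; first exact: finite_finset.
by rewrite -(setTI (_ @^-1` _)); exact: mZ.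
Qed.

Variable P : probability Omega R.

Lemma iid_law_perm {Z : I -> Omega -> V} (s : {perm I}) {F : set (cylinder_space I V)} :
  (forall i, measurable_fun setT (Z i)) ->
  mutually_independent P Z -> identically_distributed P Z -> measurable F ->
  P ((fun w i => Z (s i) w) @^-1` F) = P ((fun w i => Z i w) @^-1` F).
Proof.
move=> mZ indep iid mF.
have mZs : measurable_fun setT ((fun w i => Z (s i) w) : Omega -> cylinder_space I V).
  by apply: measurable_fun_tuple => i; exact: mZ.
have cylinderE (E : I -> set V) : (forall i, measurable (E i)) ->
    P [set w | forall i, E i (Z i w)] = (\prod_i P (Z i @^-1` E i))%E.
  move=> mE; have := indep [set: I]%SET E mE.
  rewrite (eq_bigl xpredT) => [<-|i]; last by rewrite inE.
  congr (P _); apply/seteqP; split=> w /= Ew i; first by move=> _; exact: Ew.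
  by apply: Ew; rewrite /= inE.
pose lawZs := measure_function_pushforward__canonical__measure_function_Measure P mZs.
pose lawZ := measure_function_pushforward__canonical__measure_function_Measure P
  (measurable_fun_tuple mZ).
apply: (@measure_unique _ R (cylinder_space I V) (cylinders I V) (fun=> setT) erefl
  _ _ _ lawZs lawZ) => //.
- move=> _ _ [E mE <-] [E' mE' <-]; exists (fun i => E i `&` E' i).
    by move=> i; exact: measurableI.
  apply/seteqP; split=> f /=; last by move=> [EEf E'f] i; split.
  by move=> EE'f; split=> i; case: (EE'f i).
- by move=> _; exists (fun=> setT) => //; apply/seteqP; split.
- by apply/seteqP; split => // f _; exists 0%N.
- move=> _ [E mE <-]; rewrite /= /pushforward.
  have -> : (fun w i => Z (s i) w) @^-1` [set f | forall i, E i (f i)] =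
            [set w | forall i, E (s^-1 i)%g (Z i w)].
    apply/seteqP; split => w /= Ew i; first by have := Ew (s^-1 i)%g; rewrite permKV.
    by have := Ew (s i); rewrite permK.
  rewrite (cylinderE (fun i => E (s^-1 i)%g)) ?cylinderE //.
  rewrite (reindex_inj (@perm_inj _ s)) /=.
  by apply: eq_bigr => i _; rewrite permK (iid _ i).
- by move=> _; rewrite /lawZs /= /pushforward preimage_setT probability_setT ltry.
Qed.

End CylinderSpace.

Lemma has_joint_law_unique {R : realType} {d1 d2 dT dX : measure_display}
    {O1 : measurableType d1} {O2 : measurableType d2}
    {Theta : measurableType dT} {X : measurableType dX}
    {P1 : probability O1 R} {P2 : probability O2 R}
    {r : probability Theta R} {M : R.-pker Theta ~> X}
    {t1 : O1 -> Theta} {x1 : O1 -> X} {t2 : O2 -> Theta} {x2 : O2 -> X} :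
  measurable_fun setT (fun w => (t1 w, x1 w)) ->
  measurable_fun setT (fun w => (t2 w, x2 w)) ->
  has_joint_law P1 r M t1 x1 -> has_joint_law P2 r M t2 x2 ->
  forall E, measurable E ->
  P1 ((fun w => (t1 w, x1 w)) @^-1` E) = P2 ((fun w => (t2 w, x2 w)) @^-1` E).
Proof.
move=> m1 m2 law1 law2.
pose mu1 := measure_function_pushforward__canonical__measure_function_Measure P1 m1.
pose mu2 := measure_function_pushforward__canonical__measure_function_Measure P2 m2.
apply: (@measure_unique _ R (Theta * X)%type
   [set A `*` B | A in measurable & B in measurable] (fun=> setT)
   (measurable_prod_measurableType _ _) _ _ _ mu1 mu2) => //.
- move=> _ _ [A1 mA1 [B1 mB1 <-]] [A2 mA2 [B2 mB2 <-]].
  rewrite -setXI; exists (A1 `&` A2); first exact: measurableI.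
  by exists (B1 `&` B2) => //; exact: measurableI.
- by move=> _; exists setT => //; exists setT => //; rewrite setXTT.
- by apply/seteqP; split => // x _; exists 0%N.
- by move=> _ [A mA [B mB <-]]; rewrite /= /pushforward law1 // law2.
- by move=> _; rewrite /= /pushforward preimage_setT probability_setT ltry.
Qed.

Lemma measurable_low_rank {R : realType} {dT : measure_display}
    {T : measurableType dT} {I : finType} (mark : T -> bool) (score : T -> R)
    (alpha : R) (i : I) :
  measurable_fun setT mark -> measurable_fun setT score ->
  measurable [set f : cylinder_space I T | low_rank mark score alpha f i].
Proof.
move=> mmark mscore.
have mmarkj j : measurable_fun setT (fun f : cylinder_space I T => mark (f j)).
  exact: measurableT_comp mmark (measurable_proj j).
have mscorej j : measurable_fun setT (fun f : cylinder_space I T => score (f j)).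
  exact: measurableT_comp mscore (measurable_proj j).
have mnat (b : cylinder_space I T -> bool) :
    measurable_fun setT b -> measurable_fun setT (fun f => (b f)%:R : R).
  have mnat_bool : measurable_fun setT (fun b : bool => b%:R : R) by [].
  by move=> mb; exact: measurableT_comp mnat_bool mb.
have mrank : measurable_fun setT (fun f : cylinder_space I T => rank mark score f i).
  apply: measurable_sum => j; apply: mnat.
  by apply: measurable_and => //; exact: measurable_fun_ler.
have mnmarked : measurable_fun setT (fun f : cylinder_space I T => nmarked mark f : R).
  by apply: measurable_sum => j; exact: mnat.
rewrite -[X in measurable X]setTI -[X in _ `&` X]/(_ @^-1` [set true]).
apply: measurable_and => //; apply: measurable_fun_ltr => //.
exact: measurable_funM.
Qed.

Lemma measurable_low_rank_event {R : realType} {d dT : measure_display}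
    {Omega : measurableType d} {T : measurableType dT} {I : finType}
    {Z : I -> Omega -> T} {mark : T -> bool} {score : T -> R} (alpha : R) (i : I) :
  (forall i, measurable_fun setT (Z i)) ->
  measurable_fun setT mark -> measurable_fun setT score ->
  measurable [set w | low_rank mark score alpha (fun j => Z j w) i].
Proof.
move=> mZ mmark mscore.
have := measurable_fun_tuple mZ measurableT _
  (measurable_low_rank mark score alpha i mmark mscore).
by rewrite setTI.
Qed.

Lemma sum_measure_le {R : realType} {d : measure_display} {T : measurableType d}
    (mu : {measure set T -> \bar R}) {I : finType} {E F : I -> set T} {c : R} :
  0 <= c -> (forall i, measurable (E i)) -> (forall i, measurable (F i)) ->
  (forall x, \sum_i \1_(E i) x <= c * \sum_i \1_(F i) x) ->
  (\sum_i mu (E i) <= c%:E * \sum_i mu (F i))%E.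
Proof.
move=> c_ge0 mE mF EF.
have sum_indic (G : I -> set T) : (forall i, measurable (G i)) ->
    (\sum_i mu (G i) = \int[mu]_x (\sum_i \1_(G i) x)%:E)%E.
  move=> mG; under eq_integral do rewrite -sumEFin.
  rewrite ge0_integral_sum // => [|i]; last first.
    by apply/measurable_EFinP; exact: measurable_indic.
  by apply: eq_bigr => i _; rewrite integral_indic // setIT.
have msum (G : I -> set T) : (forall i, measurable (G i)) ->
    measurable_fun setT (fun x => (\sum_i \1_(G i) x)%:E : \bar R).
  move=> mG; apply/measurable_EFinP; apply: measurable_sum => i.
  exact: measurable_indic.
rewrite !sum_indic // -ge0_integralZl_EFin //; last first.
- exact: msum.
- by move=> x _; rewrite lee_fin sumr_ge0.
apply: ge0_le_integral => //.
- by move=> x _; rewrite lee_fin sumr_ge0.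
- exact: msum.
- by apply: measurable_funeM; exact: msum.
- by move=> x _; rewrite -EFinM lee_fin.
Qed.

Lemma low_rank_prob_le {R : realType} {d dT : measure_display}
    {Omega : measurableType d} {T : measurableType dT} {P : probability Omega R}
    {I : finType} {Z : I -> Omega -> T} {mark : T -> bool} {score : T -> R}
    {alpha : R} (i0 : I) :
  0 <= alpha -> measurable_fun setT mark -> measurable_fun setT score ->
  (forall i, measurable_fun setT (Z i)) ->
  mutually_independent P Z -> identically_distributed P Z ->
  (P [set w | low_rank mark score alpha (fun i => Z i w) i0]
     <= alpha%:E * P (Z i0 @^-1` [set t | mark t]))%E.
Proof.
move=> alpha_ge0 mmark mscore mZ indep iid.
pose E i := [set w | low_rank mark score alpha (fun j => Z j w) i].
pose F i := Z i @^-1` [set t | mark t].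
have mlow (i : I) := measurable_low_rank mark score alpha i mmark mscore.
have mE i : measurable (E i) by exact: measurable_low_rank_event.
have mmarked : measurable [set t | mark t].
  by rewrite -[X in measurable X]setTI; exact: mmark.
have mF i : measurable (F i) by rewrite -[F i]setTI; exact: mZ.
have PE i : P (E i) = P (E i0).
  rewrite -(iid_law_perm P (tperm i0 i) mZ indep iid (mlow i0)).
  congr (P _); apply/seteqP; split => w /=;
    have := low_rank_perm mark score (tperm i0 i) alpha (fun j => Z j w) i0;
    by rewrite tpermL /= => ->.
have PF i : P (F i) = P (F i0) by exact: iid.
have := sum_measure_le P alpha_ge0 mE mF.
rewrite (eq_bigr _ (fun i _ => PE i)) (eq_bigr _ (fun i _ => PF i)).
have /[swap]/[apply] : forall w, \sum_i \1_(E i) w <= alpha * \sum_i \1_(F i) w.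
  move=> w; rewrite /E /F; under eq_bigr do rewrite indicE in_set_boolE.
  under [X in _ <= _ * X]eq_bigr do rewrite indicE in_set_boolE.
  exact: sum_low_rank_le.
have finP S : measurable S -> P S = (fine (P S))%:E.
  by move=> mS; rewrite fineK // fin_num_measure.
rewrite [P (E i0)]finP // [P (F i0)]finP // !sumEFin -EFinM !lee_fin !sumr_const.
by rewrite mulrnAr ler_pMn2r //; apply/card_gt0P; exists i0.
Qed.

Definition in_fst {Theta X : Type} (A : set Theta) (p : Theta * X) : bool := p.1 \in A.

Definition tau_score {R : realType} {Theta X : Type} (tau : X -> Theta -> R)
  (p : Theta * X) : R := tau p.2 p.1.

Section ConfidenceSet.
Context {R : realType} {Omega Theta X : Type} {B : nat}.
Context {tau : X -> Theta -> R} {th : 'I_B -> Omega -> Theta} {Xs : 'I_B -> Omega -> X}.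
Context {th0 : Omega -> Theta} {X0 : Omega -> X} {alpha : R} {A : set Theta}.

(* [Hhat] is a right-continuous step function, so its infimum is attained. *)
Lemma Chat_leP (w : Omega) (t0 : R) :
  (Chat tau th Xs alpha A w <= t0%:E)%E <-> alpha <= Hhat tau th Xs A w t0.
Proof.
split=> [|Ht0]; last by apply: ge_ereal_inf; exists t0%:E => //; exists t0.
apply: contraPP => /negP; rewrite -ltNge => Ht0.
apply/negP; rewrite -ltNge.
pose x b := tau (Xs b w) (th b w).
pose m := \big[Order.min/t0 + 1]_(b | (th b w \in A) && (t0 < x b)) x b.
have t0m : t0 < m by apply: lt_bigmin => [|b /andP[]//]; rewrite ltrDl.
apply: (@lt_le_trans _ _ m%:E); first by rewrite lte_fin.
apply/ereal_infP => _ [t /= Ht <-]; rewrite lee_fin leNgt; apply/negP => tm.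
suff : Hhat tau th Xs A w t <= Hhat tau th Xs A w t0.
  by move=> Htt0; move: (le_trans Ht Htt0); rewrite leNgt Ht0.
rewrite /Hhat ler_wpM2r // ?invr_ge0 ?addr_ge0 // lerD2r; apply: ler_sum => b Ab.
case xt: (x b <= t) => //=; case xt0: (x b <= t0) => //=.
have : m <= x b by apply: bigmin_le_cond; rewrite Ab ltNge xt0.
by rewrite leNgt (le_lt_trans (xt : x b <= t) tm).
Qed.

Lemma Hhat_ge_alphaE {w : Omega} : A (th0 w) ->
  (alpha <= Hhat tau th Xs A w (tau (X0 w) (th0 w))) =
  ~~ low_rank (in_fst A) (tau_score tau) alpha (fun o => all_pairs th Xs th0 X0 o w) None.
Proof.
move=> Aw; rewrite /low_rank /rank /nmarked !big_option /= /in_fst /tau_score /=.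
rewrite (mem_set Aw) lexx /= -leNgt /Hhat ler_pdivlMr; last by rewrite ltr_wpDl.
have -> : #|[set b | th b w \in A]|%:R = \sum_b (th b w \in A)%:R :> R.
  rewrite -sum1_card natr_sum big_mkcond /=; apply: eq_bigr => b _.
  by rewrite in_set_boolE; case: (_ \in _).
rewrite [1 + _]addrC [X in _ <= X]addrC; congr (_ <= 1 + _).
by rewrite big_mkcond; apply: eq_bigr => b _; case: (_ \in _).
Qed.

Lemma Rhat_newP {Apart : set (set Theta)} {w : Omega} :
  (forall A1 A2, Apart A1 -> Apart A2 -> A1 `&` A2 !=set0 -> A1 = A2) ->
  Apart A -> A (th0 w) ->
  Rhat Apart tau th Xs alpha w (X0 w) (th0 w) <->
  ~~ low_rank (in_fst A) (tau_score tau) alpha (fun o => all_pairs th Xs th0 X0 o w) None.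
Proof.
move=> disj HA Aw; rewrite -Hhat_ge_alphaE // -Chat_leP.
split=> [|Ht A' HA' A'w]; first exact.
by rewrite (disj A' A) //; exists (th0 w).
Qed.

End ConfidenceSet.

Lemma condprob_ge_setD {R : realType} {d : measure_display} {Omega : measurableType d}
    (P : probability Omega R) (S E F : set Omega) (c : R) :
  measurable E -> measurable F -> E `<=` F -> S `&` F = F `\` E ->
  (0 < P F)%E -> (P E <= c%:E * P F)%E -> 1 - c <= condprob P S F.
Proof.
move=> mE mF EF SF PF_gt0 PE_le.
have finP U : measurable U -> P U = (fine (P U))%:E.
  by move=> mU; rewrite fineK // fin_num_measure.
move: PF_gt0 PE_le; rewrite [P F]finP // [P E]finP // -EFinM !lte_fin lee_fin.
move=> PF_gt0 PE_le; rewrite /condprob SF measureD //; last first.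
  by rewrite ltey_eq fin_num_measure.
rewrite (setIidr EF) fineB ?fin_num_measure //.
by rewrite ler_pdivlMr // mulrBl mul1r lerD2l lerN2.
Qed.

Lemma measurable_in_fst {dT dX : measure_display} {Theta : measurableType dT}
    {X : measurableType dX} {A : set Theta} :
  measurable A -> measurable_fun setT (in_fst A : Theta * X -> bool).
Proof.
move=> mA; apply: (measurable_fun_bool true); rewrite setTI.
have -> : in_fst A @^-1` [set true] = A `*` [set: X].
  by apply/seteqP; split=> p /=; rewrite /in_fst; [move/set_mem|case=> /mem_set].
exact: measurableX.
Qed.

Lemma measurable_tau_score {R : realType} {dT dX : measure_display}
    {Theta : measurableType dT} {X : measurableType dX} {tau : X -> Theta -> R} :
  measurable_fun setT (fun p : X * Theta => tau p.1 p.2) ->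
  measurable_fun setT (tau_score tau).
Proof.
by move=> mtau; exact: measurableT_comp mtau (@measurable_swap _ _ Theta X).
Qed.

Lemma all_pairs_iid {R : realType} {d dT dX : measure_display}
    {Omega : measurableType d} {Theta : measurableType dT} {X : measurableType dX}
    {P : probability Omega R} {r : probability Theta R} {M : R.-pker Theta ~> X}
    {B : nat} {th : 'I_B -> Omega -> Theta} {Xs : 'I_B -> Omega -> X}
    {th0 : Omega -> Theta} {X0 : Omega -> X} :
  (forall o, measurable_fun setT (all_pairs th Xs th0 X0 o)) ->
  (forall b, has_joint_law P r M (th b) (Xs b)) -> has_joint_law P r M th0 X0 ->
  identically_distributed P (all_pairs th Xs th0 X0).
Proof.
move=> mZ law law0.
have lawE o E : measurable E ->
    P (all_pairs th Xs th0 X0 o @^-1` E) = P (all_pairs th Xs th0 X0 None @^-1` E).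
  case: o => [b|] // mE.
  exact: has_joint_law_unique (mZ (Some b)) (mZ None) (law b) law0 E mE.
by move=> i j E mE; rewrite !lawE.
Qed.

Theorem theorem2 (R : realType)
  (dT dX dO : measure_display)
  (Theta : measurableType dT) (X : measurableType dX) (Omega : measurableType dO)
  (r : probability Theta R) (M : R.-pker Theta ~> X)
  (tau : X -> Theta -> R)
  (tau_meas : measurable_fun setT (fun p : X * Theta => tau p.1 p.2))
  (tau_cont : forall (t : Theta) (c : R), M t [set x | tau x t = c] = 0%E)
  (Apart : set (set Theta)) (HApart : measurable_partition Apart)
  (P : probability Omega R) (B : nat)
  (th : 'I_B -> Omega -> Theta) (Xs : 'I_B -> Omega -> X)
  (th0 : Omega -> Theta) (X0 : Omega -> X)
  (Hmeas : forall o, measurable_fun setT (all_pairs th Xs th0 X0 o))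
  (Hindep : mutually_independent P (all_pairs th Xs th0 X0))
  (Hlaw : forall b, has_joint_law P r M (th b) (Xs b))
  (Hlaw0 : has_joint_law P r M th0 X0)
  (A : set Theta) (HA : Apart A) (HPA : (0 < P (th0 @^-1` A))%E)
  (alpha : R) (Halpha : 0 < alpha < 1) :
  1 - alpha <= condprob P [set w | Rhat Apart tau th Xs alpha w (X0 w) (th0 w)]
                           (th0 @^-1` A).
Proof.
have [mApart disj _] := HApart.
have mA := mApart A HA.
have alpha_ge0 : 0 <= alpha by case/andP: Halpha => /ltW.
pose Z := all_pairs th Xs th0 X0.
pose A0 := th0 @^-1` A.
pose E := [set w | low_rank (in_fst A) (tau_score tau) alpha (fun o => Z o w) None].
have mA0 : measurable A0.
  have mth0 : measurable_fun setT th0 := measurableT_comp measurable_fst (Hmeas None).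
  by rewrite -[A0]setTI; exact: mth0.
have A0E : Z None @^-1` [set p | in_fst A p] = A0.
  by apply/seteqP; split=> w; rewrite /= /in_fst; [move/set_mem|move/mem_set].
have bound : (P E <= alpha%:E * P A0)%E.
  rewrite -A0E; exact: low_rank_prob_le None alpha_ge0 (measurable_in_fst mA)
    (measurable_tau_score tau_meas) Hmeas Hindep (all_pairs_iid Hmeas Hlaw Hlaw0).
have cover : [set w | Rhat Apart tau th Xs alpha w (X0 w) (th0 w)] `&` A0 = A0 `\` E.
  apply/seteqP; split=> w.
    by move=> [Rw A0w]; split=> //; have /(Rhat_newP disj HA A0w)/negP := Rw.
  by move=> [A0w Ew]; split=> //; apply/(Rhat_newP disj HA A0w)/negP.
have mE : measurable E.
  exact: measurable_low_rank_event Hmeas (measurable_in_fst mA)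
    (measurable_tau_score tau_meas).
apply: condprob_ge_setD mE mA0 _ cover HPA bound.
by move=> w /andP[/set_mem].
Qed.
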